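(* For each $i\in E$, the torus-invariant divisors $\widetilde y_j$, $j\in\pi^{-1}(i)$, all have the same class in $A^1(X_{\mathbf a})$; denote it $y_i$. Moreover, $$A^\bullet(X_{\mathbf a})=\frac{\mathbb Z[x_S,y_i:\emptyset\subseteq S\subsetneq E,\ i\in E]}{\langle x_{S_1}x_{S_2}:S_1,S_2\text{ incomparable}\rangle+\langle x_Sy_i^{a_i}:i\notin S\rangle+\langle y_i-\sum_{S\not\ni i}x_S:i\in E\rangle}.$$
   Context: $E=\{1,\dots,m\}$, $\mathbf a\in\mathbb Z^m_{\ge0}$, $n=\sum a_i$, $\widetilde E$ an $n$-element set, $\pi:\widetilde E\to E$ with $|\pi^{-1}(i)|=a_i$, $\mathbf e_U=\sum_{j\in U}\mathbf e_j$. The polystellahedral fan $\Sigma_{\mathbf a}\subset\mathbb R^{\widetilde E}$ has cones $\operatorname{cone}(-\mathbf e_{\widetilde E\setminus\pi^{-1}(F_1)},\dots,-\mathbf e_{\widetilde E\setminus\pi^{-1}(F_k)},\mathbf e_j:j\in I)$ for $I\subseteq\widetilde E$ and chains $F_1\subsetneq\dots\subsetneq F_k\subsetneq F_{k+1}=E$ ($k\ge0$) with $\pi^{-1}(A)\subseteq I\Rightarrow A\subseteq F_1$; $X_{\mathbf a}$ its smooth projective toric variety. Its rays are $\rho_j=\mathbb R_{\ge0}\mathbf e_j$ ($j\in\widetilde E$), with divisor $\widetilde y_j$, and $\rho_S=\mathbb R_{\ge0}(-\mathbf e_{\widetilde E\setminus\pi^{-1}(S)})$ ($\emptyset\subseteq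 S\subsetneq E$), with divisor class $x_S$. *)

From HB Require Import structures.
From mathcomp Require Import all_boot all_order all_algebra.
From mathcomp Require Import mpoly.
Set Implicit Arguments. Unset Strict Implicit. Unset Printing Implicit Defensive.
Import Order.TTheory GRing.Theory Num.Theory.
Local Open Scope ring_scope.

Definition polyT (T : finType) := {mpoly int[#|T|]}.

Definition var (T : finType) (t : T) : polyT T := 'X_(enum_rank t).

Definition ideal_gen (R : comPzRingType) (G : R -> Prop) (p : R) : Prop :=
  exists s : seq (R * R), {in s, forall q, G q.2} /\
                          p = \sum_(q <- s) q.1 * q.2.

(* ---------- Data: E = 'I_m, Et = \widetilde E (finite type), pi : Et -> E.
   a_i := #|pi^{-1}(i)|. *)

Definition aa (m : nat) (Et : finType) (pi : Et -> 'I_m) (i : 'I_m) : nat :=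
  #|[set j | pi j == i]|.

Definition PS (m : nat) := {S : {set 'I_m} | S != setT}.

(* rays of the polystellahedral fan: rho_j (j in Et) and rho_S (S proper) *)
Definition Ray (m : nat) (Et : finType) := (Et + PS m)%type.

(* primitive vectors in Z^Et: rho_j = e_j, rho_S = - e_{Et \ pi^{-1}(S)} *)
Definition rayvec (m : nat) (Et : finType) (pi : Et -> 'I_m)
    (r : Ray m Et) (k : Et) : int :=
  match r with
  | inl j => if k == j then 1 else 0
  | inr F => if pi k \in val F then 0 else -1
  end.

(* generating set of rays of the cone attached to a chain C of proper subsets
   (F_1 < ... < F_k) and a set I of coordinates *)
Definition cone_rays (m : nat) (Et : finType) (C : {set PS m}) (I : {set Et})
    : {set Ray m Et} :=
  [set r : Ray m Et | match r with inl j => j \in I | inr F => F \in C end].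

Definition is_chain (m : nat) (C : {set PS m}) : Prop :=
  forall S T, S \in C -> T \in C -> (val S \subset val T) || (val T \subset val S).

(* the admissibility condition: pi^{-1}(A) ⊆ I  ==>  A ⊆ F_1,
   where F_1 is the least element of C ∪ {E}  (F_{k+1} = E) *)
Definition admissible (m : nat) (Et : finType) (pi : Et -> 'I_m)
    (C : {set PS m}) (I : {set Et}) : Prop :=
  forall A : {set 'I_m}, [set j | pi j \in A] \subset I ->
    forall F, F \in C -> A \subset val F.

(* a set of rays spans a cone of the polystellahedral fan Sigma_a
   (faces of cones are cones, so we close downward) *)
Definition is_face (m : nat) (Et : finType) (pi : Et -> 'I_m)
    (sigma : {set Ray m Et}) : Prop :=
  exists (C : {set PS m}) (I : {set Et}),
    is_chain C /\ admissible pi C I /\ sigma \subset cone_rays C I.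

(* ---------- Chow ring of the smooth complete toric variety X_a, via the
   Jurkiewicz--Danilov presentation: Z[x_rho] / (SR ideal + linear ideal). *)

Definition SR_gen (m : nat) (Et : finType) (pi : Et -> 'I_m)
    (p : polyT (Ray m Et)) : Prop :=
  exists sigma : {set Ray m Et}, ~ is_face pi sigma /\
    p = \prod_(r in sigma) var r.

Definition lin_gen (m : nat) (Et : finType) (pi : Et -> 'I_m)
    (p : polyT (Ray m Et)) : Prop :=
  exists u : Et -> int,
    p = \sum_(r : Ray m Et) (\sum_(k : Et) u k * rayvec pi r k)%:MP * var r.

Definition chow_ideal (m : nat) (Et : finType) (pi : Et -> 'I_m) :
    polyT (Ray m Et) -> Prop :=
  ideal_gen (fun p => SR_gen pi p \/ lin_gen pi p).

Definition Gen (m : nat) := (PS m + 'I_m)%type.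

Definition xS (m : nat) (S : PS m) : polyT (Gen m) := var (inl S : Gen m).
Definition yi (m : nat) (i : 'I_m) : polyT (Gen m) := var (inr i : Gen m).

Definition pres_gen (m : nat) (Et : finType) (pi : Et -> 'I_m)
    (p : polyT (Gen m)) : Prop :=
  (exists S1 S2 : PS m,
      ~~ (val S1 \subset val S2) /\ ~~ (val S2 \subset val S1) /\
      p = xS S1 * xS S2)
  \/ (exists (S : PS m) (i : 'I_m), i \notin val S /\
      p = xS S * yi i ^+ aa pi i)
  \/ (exists i : 'I_m, p = yi i - \sum_(S : PS m | i \notin val S) xS S).

Definition pres_ideal (m : nat) (Et : finType) (pi : Et -> 'I_m) :
    polyT (Gen m) -> Prop :=
  ideal_gen (pres_gen pi).

(* the comparison map: x_S |-> x_{rho_S}, y_i |-> \widetilde y_j for a chosen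
   j in pi^{-1}(i) (and 0 if the fibre is empty) *)
Definition cmp_img (m : nat) (Et : finType) (pi : Et -> 'I_m) (g : Gen m)
    : polyT (Ray m Et) :=
  match g with
  | inl F => var (inr F : Ray m Et)
  | inr i => match [pick j | pi j == i] with
             | Some j => var (inl j : Ray m Et)
             | None => 0
             end
  end.

Definition cmp_map (m : nat) (Et : finType) (pi : Et -> 'I_m)
    (p : polyT (Gen m)) : polyT (Ray m Et) :=
  mmap (@mpolyC _ _) (fun k => cmp_img pi (enum_val k)) p.

From HB Require Import structures.
From mathcomp Require Import all_boot all_order all_algebra.
From mathcomp Require Import mpoly.
Local Open Scope ring_scope.

(* Let phi be the comparison map and psi the map sending rho_j to y_(pi j) and
   rho_S to x_S.  The linear relation of the coordinate e_k is
   rho_k = sum_(S, pi k \notin S) rho_S, so the rho_j of a fibre are congruent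
   and phi (psi q) = q modulo the Chow ideal.  Conversely psi (phi p) = p modulo
   J: for an empty fibre y_i = sum x_S, and each such x_S = x_S y_i^0 lies in J.
   Both maps respect the generators: a non-face contains two incomparable rho_S
   or some rho_S together with a whole fibre pi^-1(i), i \notin S, and the
   linear relations are mapped to multiples of y_i - sum_(S, i \notin S) x_S. *)

Set Implicit Arguments. Unset Strict Implicit. Unset Printing Implicit Defensive.
Import GRing.Theory.

Section IdealGen.
Variables (R : comPzRingType) (G : R -> Prop).
Local Notation I := (ideal_gen G).

Lemma ideal_gen0 : I 0.
Proof. by exists [::]; split; [move=> q; rewrite in_nil | rewrite big_nil]. Qed.

Lemma ideal_gen_base p : G p -> I p.
Proof.
move=> Gp; exists [:: (1, p)]; split; last by rewrite big_seq1 mul1r.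
by move=> q; rewrite mem_seq1 => /eqP ->.
Qed.

Lemma ideal_genD p q : I p -> I q -> I (p + q).
Proof.
move=> [s [Hs ->]] [t [Ht ->]]; exists (s ++ t); split; last by rewrite big_cat.
by move=> x; rewrite mem_cat => /orP [/Hs|/Ht].
Qed.

Lemma ideal_genMl c p : I p -> I (c * p).
Proof.
move=> [s [Hs ->]]; exists [seq (c * q.1, q.2) | q <- s]; split.
  by move=> x /mapP [q qs ->] /=; apply: Hs.
by rewrite big_map mulr_sumr; apply: eq_bigr => q _ /=; rewrite mulrA.
Qed.

Lemma ideal_genMr c p : I p -> I (p * c).
Proof. by rewrite mulrC; apply: ideal_genMl. Qed.

Lemma ideal_genN p : I p -> I (- p).
Proof. by rewrite -mulN1r; apply: ideal_genMl. Qed.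

Lemma ideal_genB p q : I p -> I q -> I (p - q).
Proof. by move=> Ip Iq; apply/ideal_genD/ideal_genN. Qed.

Lemma ideal_gen_sum (J : Type) (s : seq J) (P : pred J) (F : J -> R) :
  (forall j, P j -> I (F j)) -> I (\sum_(j <- s | P j) F j).
Proof. by move=> IF; elim/big_ind: _ => //; [exact: ideal_gen0 | exact: ideal_genD]. Qed.

Lemma ideal_gen_modK p q : I (p - q) -> I q -> I p.
Proof. by move=> Ipq Iq; rewrite -(subrK q p); apply: ideal_genD. Qed.

Lemma ideal_gen_modM a b c d : I (a - b) -> I (c - d) -> I (a * c - b * d).
Proof.
have -> : a * c - b * d = a * (c - d) + (a - b) * d.
  by rewrite mulrBr mulrBl addrA subrK.
by move=> Iab Icd; apply: ideal_genD; [apply: ideal_genMl | apply: ideal_genMr].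
Qed.

Lemma ideal_gen_modX a b k : I (a - b) -> I (a ^+ k - b ^+ k).
Proof.
move=> Iab; elim: k => [|k IHk]; first by rewrite !expr0 subrr; exact: ideal_gen0.
by rewrite !exprS; apply: ideal_gen_modM.
Qed.

Lemma ideal_gen_mod_prod (J : Type) (s : seq J) (P : pred J) (F F' : J -> R) :
  (forall j, P j -> I (F j - F' j)) ->
  I (\prod_(j <- s | P j) F j - \prod_(j <- s | P j) F' j).
Proof.
move=> IF; elim/big_rec2: _ => [|j x y Pj Ixy]; first by rewrite subrr; exact: ideal_gen0.
exact: ideal_gen_modM (IF j Pj) Ixy.
Qed.

End IdealGen.

Lemma ideal_gen_rmorph (A B : comPzRingType) (GA : A -> Prop) (GB : B -> Prop)
    (f : {rmorphism A -> B}) p :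
  (forall q, GA q -> ideal_gen GB (f q)) -> ideal_gen GA p -> ideal_gen GB (f p).
Proof.
move=> fG [s [Hs ->]]; rewrite rmorph_sum big_seq; apply: ideal_gen_sum => q qs.
by rewrite rmorphM; apply/ideal_genMl/fG/Hs.
Qed.

Lemma ideal_gen_rmorphK (A B : comPzRingType) (GA : A -> Prop) (GB : B -> Prop)
    (f : {rmorphism A -> B}) (g : {rmorphism B -> A}) :
  (forall a, GA a -> ideal_gen GB (f a)) ->
  (forall b, GB b -> ideal_gen GA (g b)) ->
  (forall a, ideal_gen GA (a - g (f a))) ->
  forall a, ideal_gen GB (f a) <-> ideal_gen GA a.
Proof.
move=> fG gG gfK a; split=> [Ifa | Ia]; last exact: ideal_gen_rmorph Ia.
exact: ideal_gen_modK (gfK a) (ideal_gen_rmorph gG Ifa).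
Qed.

Lemma mpoly_rmorph_mod (n : nat) (G : {mpoly int[n]} -> Prop)
    (F : {rmorphism {mpoly int[n]} -> {mpoly int[n]}}) :
  (forall k, ideal_gen G ('X_k - F 'X_k)) -> forall p, ideal_gen G (p - F p).
Proof.
move=> FX; elim/mpolyind => [|c mm p _ _ IHp]; first by rewrite rmorph0 subrr; exact: ideal_gen0.
have FC : F c%:MP = c%:MP.
  have cE : c%:MP = c%:~R :> {mpoly int[n]} by rewrite -(rmorph_int (@mpolyC n int)) intz.
  by rewrite cE rmorph_int.
rewrite rmorphD opprD addrACA; apply: ideal_genD IHp.
rewrite -mul_mpolyC rmorphM FC -mulrBr mpolyXE_id rmorph_prod; apply: ideal_genMl.
by apply: ideal_gen_mod_prod => i _; rewrite rmorphXn; apply: ideal_gen_modX.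
Qed.

Lemma polyT_rmorph_mod (T : finType) (G : polyT T -> Prop)
    (F : {rmorphism polyT T -> polyT T}) :
  (forall t, ideal_gen G (var t - F (var t))) -> forall p, ideal_gen G (p - F p).
Proof.
move=> Fvar; apply: mpoly_rmorph_mod => k.
by have := Fvar (enum_val k); rewrite /var enum_valK.
Qed.

Lemma mmap_var (T : finType) (V : comRingType) (f : {rmorphism int -> V})
    (F : T -> V) (t : T) :
  mmap f (fun k => F (enum_val k)) (var t) = F t.
Proof. by rewrite /var mmapX mmap1U enum_rankK. Qed.

Section Polystellahedral.
Variables (m : nat) (Et : finType) (pi : Et -> 'I_m).
Local Notation Ray := (Ray m Et).
Local Notation chow := (chow_ideal pi).
Local Notation pres := (pres_ideal pi).

Lemma rayvec_sum (T : finType) (f : Ray -> polyT T) k :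
  \sum_(r : Ray) (rayvec pi r k)%:MP * f r =
  f (inl k) - \sum_(S : PS m | pi k \notin val S) f (inr S).
Proof.
rewrite big_sumType /=; congr (_ + _).
  rewrite (bigD1 k) //= eqxx mpolyC1 mul1r big1 ?addr0 // => j /negbTE.
  by rewrite eq_sym => ->; rewrite mpolyC0 mul0r.
rewrite -sumrN [RHS]big_mkcond; apply: eq_bigr => S _ /=.
by case: ifP => _; rewrite ?mpolyC0 ?mul0r ?oppr0 // mpolyCN mpolyC1 mulN1r.
Qed.

Lemma chow_lin k :
  chow (var (inl k : Ray) - \sum_(S : PS m | pi k \notin val S) var (inr S : Ray)).
Proof.
apply: ideal_gen_base; right; exists (fun k' => (k' == k)%:R).
rewrite -(rayvec_sum (fun r => var r)); apply: eq_bigr => r _; congr (_%:MP * _).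
by rewrite (bigD1 k) //= eqxx mul1r big1 ?addr0 // => j /negbTE ->; rewrite mul0r.
Qed.

Lemma chow_fibre (j j' : Et) : pi j = pi j' ->
  chow (var (inl j : Ray) - var (inl j' : Ray)).
Proof.
move=> eq_pi; have := ideal_genB (chow_lin j) (chow_lin j').
by rewrite eq_pi opprB addrA subrK.
Qed.

Definition fibre_rays (S : PS m) (i : 'I_m) : {set Ray} :=
  [set r | match r with inl j => pi j == i | inr T => T == S end].

Lemma prod_fibre_rays (V : comRingType) (f : Ray -> V) (S : PS m) (i : 'I_m) :
  \prod_(r in fibre_rays S i) f r = f (inr S) * \prod_(j | pi j == i) f (inl j).
Proof.
rewrite big_mkcond big_sumType /= mulrC; congr (_ * _).
  rewrite (bigD1 S) //= inE eqxx big1 ?mulr1 // => T /negbTE nT.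
  by rewrite inE nT.
by rewrite [RHS]big_mkcond; apply: eq_bigr => j _; rewrite inE.
Qed.

Lemma fibre_rays_not_face (S : PS m) (i : 'I_m) : i \notin val S -> ~ is_face pi (fibre_rays S i).
Proof.
move=> iS [C [I [_ [adm sub]]]].
have SC : S \in C by have := subsetP sub (inr S); rewrite !inE eqxx => /(_ isT).
have fibI : [set j | pi j \in [set i]] \subset I.
  apply/subsetP => j; rewrite !inE => /eqP pij.
  by have := subsetP sub (inl j); rewrite !inE pij eqxx => /(_ isT).
by have := adm _ fibI S SC; rewrite sub1set (negbTE iS).
Qed.

Lemma pair_not_face (S1 S2 : PS m) :
  ~~ (val S1 \subset val S2) -> ~~ (val S2 \subset val S1) ->
  ~ is_face pi [set (inr S1 : Ray); inr S2].
Proof.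
move=> n12 n21 [C [I [chC [_ sub]]]].
have S1C : S1 \in C by have := subsetP sub (inr S1); rewrite !inE eqxx => /(_ isT).
have S2C : S2 \in C by have := subsetP sub (inr S2); rewrite !inE eqxx orbT => /(_ isT).
by have := chC _ _ S1C S2C; rewrite (negbTE n12) (negbTE n21).
Qed.

Lemma prod_pair (V : comRingType) (f : Ray -> V) (S1 S2 : PS m) : S1 != S2 ->
  \prod_(r in [set (inr S1 : Ray); inr S2]) f r = f (inr S1) * f (inr S2).
Proof.
move=> ne; rewrite big_setU1 ?big_set1 // inE.
by apply/eqP => -[] /eqP; rewrite (negbTE ne).
Qed.

Lemma not_face_witness (sigma : {set Ray}) : ~ is_face pi sigma ->
  (exists S1 S2 : PS m, [/\ ~~ (val S1 \subset val S2), ~~ (val S2 \subset val S1),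
                           inr S1 \in sigma & inr S2 \in sigma])
  \/ (exists (S : PS m) (i : 'I_m), i \notin val S /\ fibre_rays S i \subset sigma).
Proof.
move=> nface; pose C := [set S | (inr S : Ray) \in sigma].
pose I := [set j | (inl j : Ray) \in sigma].
have sub : sigma \subset cone_rays C I by apply/subsetP => -[j|S] H; rewrite !inE.
case: (boolP [forall S, forall T, (S \in C) ==> (T \in C) ==>
   (val S \subset val T) || (val T \subset val S)]) => [/forallP chC | ]; last first.
  case/forallPn => S /forallPn [T]; rewrite !negb_imply negb_or !inE.
  by case/and3P => SC TC /andP [nST nTS]; left; exists S, T.
case: (boolP [forall A : {set 'I_m}, ([set j | pi j \in A] \subset I) ==>
   [forall F, (F \in C) ==> (A \subset val F)]]) => [/forallP adm | ].
  case: nface; exists C, I; split; [|split] => //.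
    by move=> S T SC TC; have /forallP /(_ T) := chC S; rewrite SC TC.
  by move=> A HA F FC; have := adm A; rewrite HA => /forallP /(_ F); rewrite FC.
case/forallPn => A; rewrite negb_imply => /andP [HA /forallPn [F]].
rewrite negb_imply => /andP [FC /subsetPn [i iA iF]]; right; exists F, i; split=> //.
apply/subsetP => -[j|T]; rewrite inE; last by move=> /eqP ->; rewrite inE in FC.
by move=> /eqP pij; have := subsetP HA j; rewrite !inE pij iA => /(_ isT).
Qed.

Variant cmp_img_fibre_spec (i : 'I_m) : polyT Ray -> Prop :=
  | CmpImgFibre j : pi j = i -> cmp_img_fibre_spec i (var (inl j : Ray))
  | CmpImgEmpty : (forall j, pi j != i) -> cmp_img_fibre_spec i 0.

Lemma cmp_img_fibreP i : cmp_img_fibre_spec i (cmp_img pi (inr i)).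
Proof.
rewrite /cmp_img; case: pickP => [j /eqP pij | none]; first exact: CmpImgFibre.
by apply: CmpImgEmpty => j; rewrite none.
Qed.

Lemma aa_fibre_prod (V : comRingType) (c : V) i : c ^+ aa pi i = \prod_(j | pi j == i) c.
Proof. by rewrite /aa -prodr_const; apply: eq_bigl => j; rewrite inE. Qed.

Lemma aa_empty_fibre i : (forall j, pi j != i) -> aa pi i = 0%N.
Proof.
by move=> nfib; apply/eqP; rewrite cards_eq0; apply/eqP/setP => j; rewrite !inE (negbTE (nfib j)).
Qed.

Lemma chow_x_empty_fibre (S : PS m) i : i \notin val S -> (forall j, pi j != i) ->
  chow (var (inr S : Ray)).
Proof.
move=> iS nfib; apply: ideal_gen_base; left; exists (fibre_rays S i).
split; first exact: fibre_rays_not_face.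
by rewrite prod_fibre_rays big1 ?mulr1 // => j; rewrite (negbTE (nfib j)).
Qed.

Lemma chow_x_y_pow (S : PS m) i : i \notin val S ->
  chow (var (inr S : Ray) * cmp_img pi (inr i) ^+ aa pi i).
Proof.
move=> iS; case: cmp_img_fibreP => [j0 pij0 | nfib]; last first.
  by rewrite aa_empty_fibre // expr0 mulr1; apply: chow_x_empty_fibre iS nfib.
apply: (ideal_gen_modK (q := \prod_(r in fibre_rays S i) var r)).
  rewrite prod_fibre_rays -mulrBr aa_fibre_prod; apply: ideal_genMl.
  by apply: ideal_gen_mod_prod => j /eqP pij; apply: chow_fibre; rewrite pij0 pij.
by apply: ideal_gen_base; left; exists (fibre_rays S i); split => //; exact: fibre_rays_not_face.
Qed.

Lemma cmp_map_var (g : Gen m) : cmp_map pi (var g) = cmp_img pi g.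
Proof. exact: mmap_var. Qed.

HB.instance Definition _ :=
  GRing.RMorphism.copy (cmp_map pi) (mmap (@mpolyC _ _) (fun k => cmp_img pi (enum_val k))).

Lemma cmp_map_pres p : pres_gen pi p -> chow (cmp_map pi p).
Proof.
case=> [[S1 [S2 [n12 [n21 ->]]]] | [[S [i [iS ->]]] | [i ->]]].
- rewrite rmorphM /= /xS !cmp_map_var; apply: ideal_gen_base; left.
  exists [set (inr S1 : Ray); inr S2]; split; first exact: pair_not_face.
  by rewrite prod_pair //; apply: contraNneq n12 => ->.
- by rewrite rmorphM rmorphXn /= /xS /yi !cmp_map_var; apply: chow_x_y_pow.
rewrite rmorphB rmorph_sum /= /yi cmp_map_var.
under eq_bigr => S _ do rewrite /xS cmp_map_var.
case: cmp_img_fibreP => [j <- | nfib]; first exact: chow_lin.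
by rewrite sub0r; apply/ideal_genN/ideal_gen_sum => S iS; apply: chow_x_empty_fibre iS nfib.
Qed.

Definition cmp_inv_img (r : Ray) : polyT (Gen m) :=
  match r with inl j => yi (pi j) | inr F => xS F end.

Definition cmp_inv : polyT Ray -> polyT (Gen m) :=
  mmap (@mpolyC _ _) (fun k => cmp_inv_img (enum_val k)).

HB.instance Definition _ := GRing.RMorphism.on cmp_inv.

Lemma cmp_inv_var r : cmp_inv (var r) = cmp_inv_img r.
Proof. exact: mmap_var. Qed.

Lemma cmp_inv_SR q : SR_gen pi q -> pres (cmp_inv q).
Proof.
case=> sigma [nface ->]; rewrite rmorph_prod /=.
under eq_bigr => r _ do rewrite cmp_inv_var.
case: (not_face_witness nface) => [[S1 [S2 [n12 n21 S1s S2s]]] | [S [i [iS sub]]]].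
- have sub : [set (inr S1 : Ray); inr S2] \subset sigma.
    by apply/subsetP => r; rewrite !inE => /orP [] /eqP ->.
  rewrite (big_setID [set (inr S1 : Ray); inr S2]) /= (setIidPr sub) prod_pair; last first.
    by apply: contraNneq n12 => ->.
  by apply/ideal_genMr/ideal_gen_base; left; exists S1, S2.
rewrite (big_setID (fibre_rays S i)) /= (setIidPr sub) prod_fibre_rays /=.
apply/ideal_genMr/ideal_gen_base; right; left; exists S, i; split => //; congr (_ * _).
by rewrite aa_fibre_prod; apply: eq_bigr => j /eqP ->.
Qed.

Lemma cmp_inv_lin q : lin_gen pi q -> pres (cmp_inv q).
Proof.
case=> u ->; rewrite rmorph_sum /=.
under eq_bigr => r _ do rewrite rmorphM /= {1}/cmp_inv mmapC cmp_inv_var raddf_sum mulr_suml.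
rewrite exchange_big /=; apply: ideal_gen_sum => k _.
under eq_bigr => r _ do rewrite mpolyCM -mulrA.
rewrite -mulr_sumr rayvec_sum; apply/ideal_genMl/ideal_gen_base; right; right.
by exists (pi k).
Qed.

Lemma cmp_mapK_mod q : chow (q - cmp_map pi (cmp_inv q)).
Proof.
apply: (polyT_rmorph_mod (F := cmp_map pi \o cmp_inv)) => -[j|S] /=.
  rewrite cmp_inv_var /yi cmp_map_var.
  case: cmp_img_fibreP => [j0 pij0 | nfib]; first exact: chow_fibre (esym pij0).
  by have := nfib j; rewrite eqxx.
by rewrite cmp_inv_var /xS cmp_map_var subrr; exact: ideal_gen0.
Qed.

Lemma cmp_invK_mod p : pres (p - cmp_inv (cmp_map pi p)).
Proof.
apply: (polyT_rmorph_mod (F := cmp_inv \o cmp_map pi)) => -[S|i] /=; rewrite cmp_map_var.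
  by rewrite /= cmp_inv_var subrr; exact: ideal_gen0.
case: cmp_img_fibreP => [j <- | nfib]; first by rewrite cmp_inv_var subrr; exact: ideal_gen0.
rewrite rmorph0 subr0 -(subrK (\sum_(S : PS m | i \notin val S) xS S) (var _)).
apply: ideal_genD; first by apply: ideal_gen_base; right; right; exists i.
apply: ideal_gen_sum => S iS; apply: ideal_gen_base; right; left; exists S, i.
by rewrite aa_empty_fibre // expr0 mulr1.
Qed.

End Polystellahedral.

Theorem corollary2p5 (m : nat) (Et : finType) (pi : Et -> 'I_m) :
  (* all \widetilde y_j, j in pi^{-1}(i), have the same class in A^1(X_a) *)
  (forall j j' : Et, pi j = pi j' ->
     chow_ideal pi (var (inl j : Ray m Et) - var (inl j' : Ray m Et)))
  (* the comparison map induces Z[x_S, y_i]/J  ≅  A^*(X_a): surjective ... *)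
  /\ (forall q : polyT (Ray m Et),
        exists p : polyT (Gen m), chow_ideal pi (q - cmp_map pi p))
  (* ... with kernel exactly the stated ideal J *)
  /\ (forall p : polyT (Gen m), chow_ideal pi (cmp_map pi p) <-> pres_ideal pi p).
Proof.
split; first exact: chow_fibre.
split.
  by move=> q; exists (cmp_inv pi q); apply: cmp_mapK_mod.
apply: (ideal_gen_rmorphK (g := cmp_inv pi)).
- exact: cmp_map_pres.
- by move=> q [/cmp_inv_SR | /cmp_inv_lin].
- exact: cmp_invK_mod.
Qed.
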